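(* Let $\mathbf{A}$ be an $n$-dimensional cyclic Leibniz algebra over $\mathbb{C}$ with a generator $a$ satisfying $$aa^n=\alpha_k a^k+\alpha_{k+1}a^{k+1}+\cdots+\alpha_n a^n$$ for some $2\le k\le n$ and $\alpha_k,\ldots,\alpha_n\in\mathbb{C}$ with $\alpha_k\neq 0$. Then: (i) every generator $x=c_1a+c_2a^2+\cdots+c_na^n$ ($c_i\in\mathbb{C}$) of $\mathbf{A}$ satisfies $$xx^n=c_1^{\,n-k+1}\alpha_k x^k+c_1^{\,n-k}\alpha_{k+1}x^{k+1}+\cdots+c_1\alpha_n x^n,$$ i.e. the coefficient of $x^{k+i}$ is $c_1^{\,n-k+1-i}\alpha_{k+i}$ for $0\le i\le n-k$; (ii) for each $c_1\in\mathbb{C}$ with $c_1\neq 0$, $\mathbf{A}$ has at least one generator $x=c_1a+c_2a^2+\cdots+c_na^n$ (with this first coordinate $c_1$) satisfying the displayed identity of (i).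
   Context: A (left) Leibniz algebra is a vector space with a bilinear product such that $x(yz)=(xy)z+y(xz)$ for all $x,y,z$. A cyclic Leibniz algebra is a Leibniz algebra generated by a single element. For an element $x$ set $x^1=x$ and $x^{j+1}=x\,x^j$. In an $n$-dimensional cyclic Leibniz algebra, an element $x$ is called a generator (cyclic generator) if $\{x,x^2,\ldots,x^n\}$ is a basis. *)

From HB Require Import structures.
From mathcomp Require Import all_boot all_order all_algebra.
From mathcomp Require Import reals.
From mathcomp.real_closed Require Import complex.
Set Implicit Arguments. Unset Strict Implicit. Unset Printing Implicit Defensive.
Import GRing.Theory.
Local Open Scope ring_scope.

Definition leibniz_algebra (K : fieldType) (V : vectType K) (mul : V -> V -> V) :=
  [/\ (forall (c : K) (x y z : V), mul (c *: x + y) z = c *: mul x z + mul y z),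
      (forall (c : K) (x y z : V), mul x (c *: y + z) = c *: mul x y + mul x z)
    & (forall x y z : V, mul x (mul y z) = mul (mul x y) z + mul y (mul x z))].

(* lpow mul x j = x^j for j >= 1, with x^1 = x and x^(j+1) = x x^j.
   (lpow mul x 0 = 0 is an unused convention.) *)
Fixpoint lpow (K : fieldType) (V : vectType K) (mul : V -> V -> V) (x : V) (j : nat) : V :=
  match j with
  | 0 => 0
  | j'.+1 => if j' is 0 then x else mul x (lpow mul x j')
  end.

Definition is_generator (K : fieldType) (V : vectType K) (mul : V -> V -> V)
  (n : nat) (x : V) : bool :=
  basis_of fullv [seq lpow mul x j | j <- iota 1 n].

From HB Require Import structures.
From mathcomp Require Import all_boot all_order all_algebra.
From mathcomp Require Import reals.
From mathcomp.real_closed Require Import complex.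
Import GRing.Theory.
Set Implicit Arguments.
Unset Strict Implicit.
Unset Printing Implicit Defensive.
Local Open Scope ring_scope.

(** In a left Leibniz algebra every power a^j with j >= 2 annihilates from
    the left: the Leibniz identity gives (a a^j) z = a (a^j z) - a^j (a z).
    Hence left multiplication by x = c_1 a + ... + c_n a^n is c_1 L_a, and
    x^(j+1) = c_1^j L_a^j x.  The relation a a^n = sum_i alpha_i a^i says
    that L_a^n and sum_i alpha_i L_a^(i-1) agree on every power a^j, hence
    on x, and multiplying by c_1^n turns this into (i).  For (ii) the
    generator c_1 a works. *)

Section IterLinear.
Variables (R : pzRingType) (U : lmodType R).

Lemma iter_linearZ (f : {linear U -> U}) m (c : R) (u : U) :
  iter m f (c *: u) = c *: iter m f u.
Proof. by elim: m => //= m ->; rewrite linearZ. Qed.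

Lemma iter_linear_comb (f : {linear U -> U}) m (I : Type) (r : seq I)
    (P : pred I) (c : I -> R) (u : I -> U) :
  iter m f (\sum_(i <- r | P i) c i *: u i)
    = \sum_(i <- r | P i) c i *: iter m f (u i).
Proof.
elim: m => //= m ->; rewrite linear_sum.
by apply: eq_bigr => i _; rewrite linearZ.
Qed.

End IterLinear.

Section LeibnizAlgebra.
Variables (K : fieldType) (V : vectType K) (mul : V -> V -> V).
Hypothesis mulL : leibniz_algebra mul.

Definition lmul (x : V) : {linear V -> V} :=
  HB.pack_for {linear V -> V} (mul x)
    (GRing.isLinear.Build K V V *:%R (mul x)
       (let: And3 _ linr _ := mulL in fun c y z => linr c x y z)).

Definition rmul (z : V) : {linear V -> V} :=
  HB.pack_for {linear V -> V} (mul^~ z)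
    (GRing.isLinear.Build K V V *:%R (mul^~ z)
       (let: And3 linl _ _ := mulL in fun c x y => linl c x y z)).

Lemma lpow_iter x j : lpow mul x j.+1 = iter j (lmul x) x.
Proof. by elim: j => //= j <-. Qed.

Lemma lpowS x j : (0 < j)%N -> lpow mul x j.+1 = mul x (lpow mul x j).
Proof. by case: j. Qed.

Lemma iter_lmul_lpow a m j :
  iter m (lmul a) (lpow mul a j.+1) = lpow mul a (m + j).+1.
Proof. by rewrite !lpow_iter iterD. Qed.

Lemma mul_lpow_eq0 a j z : (1 < j)%N -> mul (lpow mul a j) z = 0.
Proof.
have [_ _ leib] := mulL.
elim: j z => [|[|j] IH] z // _.
have /esym/(canRL (addrK _)) := leib a (lpow mul a j.+1) z.
case: j IH => [_ /= ->|j IH ->]; first by rewrite subrr.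
by rewrite !IH // -[mul a 0]/(lmul a 0) linear0 subrr.
Qed.

Lemma mul_lcomb_l n (c : nat -> K) a z : (0 < n)%N ->
  mul (\sum_(1 <= i < n.+1) c i *: lpow mul a i) z = c 1%N *: mul a z.
Proof.
move=> n_gt0; rewrite -[LHS]/(rmul z _) linear_sum big_ltn ?ltnS //.
rewrite big_nat_cond big1 ?addr0 ?linearZ // => i /andP[/andP[i_gt1 _] _].
by rewrite linearZ /= mul_lpow_eq0 ?scaler0.
Qed.

Lemma lpow_left_scaled a x (c : K) : (forall z, mul x z = c *: mul a z) ->
  forall j, lpow mul x j.+1 = c ^+ j *: iter j (lmul a) x.
Proof.
move=> mulx j; rewrite lpow_iter; elim: j => [|j IH]; first by rewrite scale1r.
by rewrite !iterS IH linearZ /= mulx scalerA -exprSr.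
Qed.

Lemma lpow_scale (c : K) a j : lpow mul (c *: a) j = c ^+ j *: lpow mul a j.
Proof.
case: j => [|j]; first by rewrite scaler0.
have mulca z : mul (c *: a) z = c *: mul a z by rewrite -[LHS]/(rmul z _) linearZ.
by rewrite (lpow_left_scaled mulca) iter_linearZ scalerA -exprSr lpow_iter.
Qed.

Section PowerRelation.
Variables (n k : nat) (alpha : nat -> K) (a : V).
Hypotheses (k_gt0 : (0 < k)%N) (k_le_n : (k <= n)%N).
Hypothesis rel : mul a (lpow mul a n) = \sum_(k <= i < n.+1) alpha i *: lpow mul a i.

Lemma iter_lmul_lpow_rel j :
  iter n (lmul a) (lpow mul a j.+1)
    = \sum_(k <= i < n.+1) alpha i *: iter i.-1 (lmul a) (lpow mul a j.+1).
Proof.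
rewrite iter_lmul_lpow addnC -iter_lmul_lpow lpowS ?(leq_trans k_gt0) // rel.
rewrite iter_linear_comb; apply: eq_big_nat => -[|i] /andP[k_le_i _].
  by move: (leq_trans k_gt0 k_le_i).
by rewrite !iter_lmul_lpow addnC.
Qed.

Lemma iter_lmul_lcomb_rel (c : nat -> K) :
  let y := \sum_(1 <= j < n.+1) c j *: lpow mul a j in
  iter n (lmul a) y = \sum_(k <= i < n.+1) alpha i *: iter i.-1 (lmul a) y.
Proof.
move=> y; have -> : y = \sum_(0 <= j < n) c j.+1 *: lpow mul a j.+1.
  by rewrite /y big_add1.
rewrite iter_linear_comb.
under eq_bigr => j _ do rewrite iter_lmul_lpow_rel scaler_sumr.
rewrite exchange_big; apply: eq_bigr => i _.
rewrite iter_linear_comb scaler_sumr; apply: eq_bigr => j _.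
by rewrite !scalerA mulrC.
Qed.

Lemma lcomb_mul_lpow (c : nat -> K) :
  let x := \sum_(1 <= i < n.+1) c i *: lpow mul a i in
  mul x (lpow mul x n)
    = \sum_(k <= i < n.+1) (c 1%N ^+ (n - i).+1 * alpha i) *: lpow mul x i.
Proof.
move=> x; have n_gt0 : (0 < n)%N by apply: leq_trans k_le_n.
have mulx z : mul x z = c 1%N *: mul a z by apply: mul_lcomb_l.
have [n' def_n] : exists n', n = n'.+1 by exists n.-1; rewrite prednK.
rewrite {1}def_n (lpow_left_scaled mulx) mulx -[mul a _]/(lmul a _) linearZ.
rewrite scalerA -exprS -[lmul a _]/(iter n'.+1 (lmul a) x) -def_n.
rewrite iter_lmul_lcomb_rel scaler_sumr.
apply: eq_big_nat => -[|i] /andP[k_le_i i_le_n]; first by move: (leq_trans k_gt0 k_le_i).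
rewrite (lpow_left_scaled mulx) !scalerA mulrAC -exprD.
by rewrite ltnS in i_le_n; rewrite subnSK // subnK // ltnW.
Qed.

End PowerRelation.

Lemma is_generator_scale n (c : K) a :
  c != 0 -> is_generator mul n a -> is_generator mul n (c *: a).
Proof.
move=> c_neq0 gen_a.
have dimV : \dim (fullv : {vspace V}) = n by rewrite (size_basis gen_a).
rewrite /is_generator basisEdim size_map size_iota dimV leqnn andbT.
rewrite -(span_basis gen_a); apply/span_subvP => _ /mapP[j j_in ->].
have -> : lpow mul a j = (c ^+ j)^-1 *: lpow mul (c *: a) j.
  by rewrite lpow_scale scalerA mulVf ?scale1r // expf_neq0.
by apply/memvZ/memv_span/map_f.
Qed.

End LeibnizAlgebra.

Lemma lcomb_delta1 (K : fieldType) (V : vectType K) (u : nat -> V) n (c1 : K) :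
  (0 < n)%N ->
  \sum_(1 <= i < n.+1) (if i == 1%N then c1 else 0) *: u i = c1 *: u 1%N.
Proof.
move=> n_gt0; rewrite big_ltn ?ltnS // eqxx big_nat_cond big1 ?addr0 //.
by move=> i /andP[/andP[i_gt1 _] _]; rewrite gtn_eqF // scale0r.
Qed.

Theorem lemma3p2 (R : realType) (V : vectType R[i]) (mul : V -> V -> V)
  (n k : nat) (a : V) (alpha : nat -> R[i]) :
  leibniz_algebra mul ->
  \dim (fullv : {vspace V}) = n ->
  is_generator mul n a ->
  (2 <= k <= n)%N ->
  alpha k != 0 ->
  mul a (lpow mul a n) = \sum_(k <= i < n.+1) alpha i *: lpow mul a i ->
  (forall (c : nat -> R[i]) (x : V),
     x = \sum_(1 <= i < n.+1) c i *: lpow mul a i ->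
     is_generator mul n x ->
     mul x (lpow mul x n)
       = \sum_(k <= i < n.+1) (c 1%N ^+ (n - i).+1 * alpha i) *: lpow mul x i)
  /\
  (forall c1 : R[i], c1 != 0 ->
     exists c : nat -> R[i],
       c 1%N = c1 /\
       let x := \sum_(1 <= i < n.+1) c i *: lpow mul a i in
       is_generator mul n x /\
       mul x (lpow mul x n)
         = \sum_(k <= i < n.+1) (c1 ^+ (n - i).+1 * alpha i) *: lpow mul x i).
Proof.
move=> mulL _ gen_a /andP[k_gt1 k_le_n] _ rel.
have k_gt0 : (0 < k)%N by apply: ltnW.
have n_gt0 : (0 < n)%N by apply: leq_trans k_le_n.
split=> [c x -> _|c1 c1_neq0]; first exact: lcomb_mul_lpow.
exists (fun i => if i == 1%N then c1 else 0); split=> //.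
split; last exact: (lcomb_mul_lpow mulL k_gt0 k_le_n rel).
by rewrite lcomb_delta1 //; apply: is_generator_scale.
Qed.
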